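(* Let $G$ be a group, $\mathbb{F}$ a field, and $\alpha,\beta$ non-zero elements of $\mathbb{F}[G]$ with $|supp(\alpha)|=n$ and $\alpha\beta=0$. Then every vertex of $Z(\alpha,\beta)$ has degree in $\{n,n+1,\dots,n(n-1)\}$. Moreover, if $\mathbb{F}=\mathbb{F}_2$, then the degrees of all vertices of $Z(\alpha,\beta)$ are even when $n$ is even and odd when $n$ is odd.
   Context: $supp(\gamma)=\{x\in G:\gamma_x\ne0\}$. The zero-divisor graph $Z(\alpha,\beta)$ (for $\alpha\beta=0$) is the multigraph with vertex set $supp(\beta)$ whose edges are the sets $\{(h,h',g,g'),(h',h,g',g)\}$ with $h,h'\in supp(\alpha)$, $g,g'\in supp(\beta)$, $g\ne g'$, $hg=h'g'$; such an edge joins $g$ and $g'$. The degree of a vertex is the number of edges incident to it. *)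

From HB Require Import structures.
From mathcomp Require Import all_boot all_order all_algebra.
From mathcomp Require Import finmap.
Set Implicit Arguments. Unset Strict Implicit. Unset Printing Implicit Defensive.
Import Order.TTheory GRing.Theory Num.Theory.
Local Open Scope ring_scope.
Local Open Scope fset_scope.

Definition is_group (G : Type) (mul : G -> G -> G) (one : G) (inv : G -> G) : Prop :=
  [/\ forall x y z, mul x (mul y z) = mul (mul x y) z,
      forall x, mul one x = x,
      forall x, mul x one = x,
      forall x, mul (inv x) x = one &
      forall x, mul x (inv x) = one].

Notation grpalg G F := {fsfun G -> F with 0%R}.

Section ZeroDivisorGraph.
Variables (G : choiceType) (F : fieldType) (mul : G -> G -> G).

Definition supp (gamma : grpalg G F) : {fset G} := finsupp gamma.

(* coefficient of x in the product alpha * beta in F[G] *)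
Definition gaprod (alpha beta : grpalg G F) (x : G) : F :=
  \sum_(h <- supp alpha) \sum_(g <- supp beta | mul h g == x) alpha h * beta g.

Definition tup := (G * G * G * G)%type.

Definition swap_tup (t : tup) : tup :=
  let: (h, h', g, g') := t in (h', h, g', g).

Definition zd_tuples (alpha beta : grpalg G F) : {fset tup} :=
  [fset t in [seq (a.1.1, a.1.2, a.2.1, a.2.2) |
                a <- [seq (p, q) | p <- [seq (h, h') | h <- supp alpha, h' <- supp alpha],
                                   q <- [seq (g, g') | g <- supp beta, g' <- supp beta]]]
     | (t.1.2 != t.2) && (mul t.1.1.1 t.1.2 == mul t.1.1.2 t.2)].

Definition zd_edges (alpha beta : grpalg G F) : {fset {fset tup}} :=
  [fset [fset t; swap_tup t] | t in zd_tuples alpha beta].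

(* an edge {(h,h',g,g'),(h',h,g',g)} joins g and g' *)
Definition zd_incident (e : {fset tup}) (v : G) : bool :=
  [exists t : e, ((val t).1.2 == v) || ((val t).2 == v)].

Definition zd_degree (alpha beta : grpalg G F) (v : G) : nat :=
  #|` [fset e in zd_edges alpha beta | zd_incident e v]|.

End ZeroDivisorGraph.

From HB Require Import structures.
From mathcomp Require Import all_boot all_order all_algebra.
From mathcomp Require Import finmap.
Import GRing.Theory.
Local Open Scope ring_scope.
Local Open Scope fset_scope.

(* Every edge at v contains exactly one tuple
   (h, h', v, g'), and such a tuple is determined by (h, h') since
   g' = h'^-1 h v.  For h in supp(alpha), the admissible h' are the
   "partners" h' <> h of h with h'^-1 h v in supp(beta), so deg v is the sum
   over h of their numbers c(h) <= n - 1.  The coefficient of h v in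
   alpha beta is alpha(h) beta(v) + sum over the partners h' of
   alpha(h') beta(h'^-1 h v); as it vanishes, c(h) >= 1, and over F_2 it reads
   1 + c(h) = 0, so every c(h) is odd and deg v has the parity of n. *)

Section GroupLaws.
Context {G : Type} {mul : G -> G -> G} {one : G} {inv : G -> G}.
Hypothesis grp : is_group mul one inv.

Lemma is_group_mulKg x y : mul (inv x) (mul x y) = y.
Proof. by case: grp => mulA mul1g _ mulVg _; rewrite mulA mulVg mul1g. Qed.

Lemma is_group_mulVKg x y : mul x (mul (inv x) y) = y.
Proof. by case: grp => mulA mul1g _ _ mulgV; rewrite mulA mulgV mul1g. Qed.

Lemma is_group_mulIg x : injective (mul^~ x).
Proof.
case: grp => mulA _ mulg1 _ mulgV y z /(congr1 (mul^~ (inv x))) /=.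
by rewrite -!mulA mulgV !mulg1.
Qed.

End GroupLaws.

Lemma mem_allpairs_pair (S T : eqType) (s : seq S) (t : seq T) x y :
  ((x, y) \in [seq (a, b) | a <- s, b <- t]) = (x \in s) && (y \in t).
Proof.
apply/allpairsP/andP => [[[a b] /= [as_ bt [-> ->]]] | [xs yt]] //.
by exists (x, y).
Qed.

Lemma sum_nat_seq_bounds (I : eqType) (r : seq I) (f : I -> nat) a b :
  {in r, forall i, a <= f i <= b}%N ->
  (size r * a <= \sum_(i <- r) f i <= size r * b)%N.
Proof.
elim: r => [|i r IHr] fr; rewrite ?big_nil // big_cons !mulSn.
have /andP[fia fib] := fr i (mem_head i r).
have /andP[ra rb] := IHr (fun j jr => fr j (@mem_behead _ (i :: r) j jr)).
by rewrite !leq_add.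
Qed.

Lemma odd_sum_odd (I : eqType) (r : seq I) (f : I -> nat) :
  {in r, forall i, odd (f i)} -> odd (\sum_(i <- r) f i) = odd (size r).
Proof.
elim: r => [|i r IHr] fr; rewrite ?big_nil // big_cons oddD fr ?mem_head //.
by rewrite IHr // => j jr; apply: fr (@mem_behead _ (i :: r) j jr).
Qed.

Lemma two_in_pchar (F : fieldType) : (forall c : F, c = 0 \/ c = 1) -> 2%N \in [pchar F].
Proof.
move=> F01; rewrite inE /=; apply/eqP; case: (F01 2%:R) => // two1.
move/(congr1 (fun c => c - 1)): two1.
by rewrite subrr mulr2n addrK => /eqP; rewrite oner_eq0.
Qed.

Lemma mem_supp {G : choiceType} {F : fieldType} (gamma : grpalg G F) x :
  (x \in supp gamma) = (gamma x != 0).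
Proof. exact: mem_finsupp. Qed.

Section ZeroDivisorGraph.
Context {G : choiceType} {F : fieldType}.
Variables (mul : G -> G -> G) (alpha beta : grpalg G F).

Lemma mem_zd_tuples h h' g g' :
  ((h, h', g, g') \in zd_tuples mul alpha beta) =
  [&& h \in supp alpha, h' \in supp alpha, g \in supp beta, g' \in supp beta,
      g != g' & mul h g == mul h' g'].
Proof.
pose flat (a : G * G * (G * G)) := (a.1.1, a.1.2, a.2.1, a.2.2).
have flat_inj : injective flat by move=> [[? ?] [? ?]] [[? ?] [? ?]] [-> -> -> ->].
rewrite /zd_tuples inE inE -/flat -[(h, h', g, g')]/(flat ((h, h'), (g, g'))).
by rewrite mem_map //= !mem_allpairs_pair -!andbA.
Qed.

Lemma swap_tupK : involutive (@swap_tup G).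
Proof. by case=> [[[h h'] g] g']. Qed.

Lemma swap_zd_tuples t :
  (swap_tup t \in zd_tuples mul alpha beta) = (t \in zd_tuples mul alpha beta).
Proof.
case: t => [[[h h'] g] g']; rewrite !mem_zd_tuples (eq_sym g') (eq_sym (mul h' g')).
by case: (h \in _); case: (h' \in _); case: (g \in _); case: (g' \in _).
Qed.

Definition edge_of (t : tup G) : {fset tup G} := [fset t; swap_tup t].

Lemma edge_of_swap t : edge_of (swap_tup t) = edge_of t.
Proof. by rewrite /edge_of swap_tupK fsetUC. Qed.

Lemma zd_incident_edge_of t v :
  zd_incident (edge_of t) v = (t.1.2 == v) || (t.2 == v).
Proof.
apply/existsP/idP => [[[u ut] /=] | vt]; last by exists [` fset21 t (swap_tup t)].
move: ut; rewrite !inE => /orP[] /eqP-> //.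
by case: t => [[[h h'] g] g'] /=; rewrite orbC.
Qed.

Definition zd_tuples_at v : {fset tup G} :=
  [fset t in zd_tuples mul alpha beta | t.1.2 == v].

Lemma mem_zd_tuples_at v t :
  (t \in zd_tuples_at v) = (t \in zd_tuples mul alpha beta) && (t.1.2 == v).
Proof. by rewrite inE. Qed.

Lemma zd_edges_at v :
  [fset e in zd_edges mul alpha beta | zd_incident e v] = edge_of @` zd_tuples_at v.
Proof.
apply/fsetP=> e; rewrite inE; apply/andP/imfsetP => [[/imfsetP[t tZ ->]] | [t]].
  rewrite zd_incident_edge_of => /orP[vt | vt].
    by exists t; rewrite // mem_zd_tuples_at tZ.
  exists (swap_tup t); rewrite ?edge_of_swap // mem_zd_tuples_at swap_zd_tuples tZ.
  by case: t vt {tZ} => [[[]]].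
rewrite mem_zd_tuples_at => /andP[tZ vt] ->; split; first exact: in_imfset.
by rewrite zd_incident_edge_of vt.
Qed.

Lemma zd_degreeE v : zd_degree mul alpha beta v = #|` zd_tuples_at v|.
Proof.
rewrite /zd_degree zd_edges_at card_in_imfset // => t u.
rewrite !mem_zd_tuples_at => /andP[_ /eqP vt] /andP[uZ /eqP vu] tu.
have : t \in edge_of u by rewrite -tu !inE eqxx.
rewrite !inE => /orP[/eqP // | /eqP tE]; move: uZ vu vt; rewrite tE.
(* Otherwise both endpoints g, g' of the edge would equal v. *)
case: u {tu tE} => [[[h h'] g] g'] /=; rewrite mem_zd_tuples.
by case/and5P=> _ _ _ _ /andP[gg' _] gv g'v; rewrite gv g'v eqxx in gg'.
Qed.

End ZeroDivisorGraph.

Definition zd_partners {G : choiceType} {F : fieldType} (mul : G -> G -> G)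
    (inv : G -> G) (alpha beta : grpalg G F) (v h : G) : seq G :=
  [seq h' <- supp alpha | (h' != h) && (mul (inv h') (mul h v) \in supp beta)].

Lemma size_zd_partners_le {G : choiceType} {F : fieldType} (mul : G -> G -> G)
    (inv : G -> G) (alpha beta : grpalg G F) v h : h \in supp alpha ->
  (size (zd_partners mul inv alpha beta v h) <= #|` supp alpha| - 1)%N.
Proof.
move=> hA; rewrite size_filter.
apply: leq_trans (sub_count (a2 := predC (pred1 h)) _ _) _ => [h' /andP[] //|].
by rewrite -(count_predC (pred1 h)) count_uniq_mem ?fset_uniq // hA add1n subn1.
Qed.

Section Convolution.
Context {G : choiceType} {F : fieldType} {mul : G -> G -> G} {one : G} {inv : G -> G}.
Context (grp : is_group mul one inv) {alpha beta : grpalg G F}.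

Lemma gaprodE x :
  gaprod mul alpha beta x = \sum_(h <- supp alpha) alpha h * beta (mul (inv h) x).
Proof.
apply: eq_bigr => h _; rewrite -big_distrr /=; congr (_ * _).
rewrite (eq_bigl (pred1 (mul (inv h) x))) => [|g] /=; last first.
  by apply/eqP/eqP => [<- | ->]; rewrite ?(is_group_mulKg grp) ?(is_group_mulVKg grp).
have [hxB | hxNB] := boolP (mul (inv h) x \in supp beta).
  exact: (@fbig_pred1_inj _ _ _ _ _ beta id _ _ hxB (@inj_id G)).
rewrite big1_seq => [|g /andP[/eqP -> gB]]; last by rewrite gB in hxNB.
by apply/esym/eqP; rewrite -memNfinsupp.
Qed.

Lemma gaprod_mul_partners h v : h \in supp alpha ->
  gaprod mul alpha beta (mul h v) = (alpha h * beta v +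
    \sum_(h' <- zd_partners mul inv alpha beta v h)
       alpha h' * beta (mul (inv h') (mul h v)))%R.
Proof.
move=> hA; rewrite gaprodE (bigD1_seq h) ?fset_uniq //= (is_group_mulKg grp).
congr (_ + _)%R; rewrite big_filter big_mkcondr; apply: eq_bigr => h' _.
by case: ifPn => //; rewrite mem_supp negbK => /eqP->; rewrite mulr0.
Qed.

Lemma zd_tuples_atE v : v \in supp beta ->
  zd_tuples_at mul alpha beta v =
  [fset t in [seq (h, h', v, mul (inv h') (mul h v))
               | h <- supp alpha, h' <- zd_partners mul inv alpha beta v h]].
Proof.
move=> vB; apply/fsetP => -[[[h h'] g] g'].
rewrite mem_zd_tuples_at mem_zd_tuples inE /=.
apply/idP/allpairsPdep => [| [x [y [xA]]]].
  case/andP=> /and5P[hA h'A _ g'B /andP[gg' /eqP hgE]] /eqP gv; subst g.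
  have g'E : g' = mul (inv h') (mul h v) by rewrite hgE (is_group_mulKg grp).
  subst g'; exists h, h'; split => //; rewrite mem_filter h'A g'B !andbT.
  by apply: contraNneq gg' => ->; rewrite (is_group_mulKg grp).
rewrite mem_filter => /andP[/andP[yx yB] yA] [-> -> -> ->].
rewrite xA yA vB yB (is_group_mulVKg grp) !eqxx !andbT /=.
apply: contraNneq yx => vE; apply/eqP/(is_group_mulIg grp v).
by rewrite {1}vE (is_group_mulVKg grp).
Qed.

Lemma card_zd_tuples_at v : v \in supp beta ->
  #|` zd_tuples_at mul alpha beta v| =
    (\sum_(h <- supp alpha) size (zd_partners mul inv alpha beta v h))%N.
Proof.
move=> vB; rewrite zd_tuples_atE // card_fseq undup_id ?size_allpairs_dep ?sumnE ?big_map //.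
apply: allpairs_uniq_dep => [|h _|[h h'] [k k'] _ _ /= [-> ->]] //.
exact: filter_uniq (fset_uniq _).
Qed.

Section ZeroProduct.
Hypothesis ab0 : forall x, gaprod mul alpha beta x = 0.
Context {h v : G} (hA : h \in supp alpha) (vB : v \in supp beta).

Lemma size_zd_partners_gt0 : (0 < size (zd_partners mul inv alpha beta v h))%N.
Proof.
rewrite lt0n size_eq0; apply/eqP => partners0.
have /eqP := ab0 (mul h v); rewrite gaprod_mul_partners // partners0 big_nil addr0.
by apply/negP/mulf_neq0; rewrite -mem_supp.
Qed.

Lemma odd_size_zd_partners : (forall c : F, c = 0 \/ c = 1) ->
  odd (size (zd_partners mul inv alpha beta v h)).
Proof.
move=> F01; have supp1 (gamma : grpalg G F) x : x \in supp gamma -> gamma x = 1.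
  by rewrite mem_supp; case: (F01 (gamma x)) => ->; rewrite ?eqxx.
have := ab0 (mul h v); rewrite gaprod_mul_partners // !supp1 // mul1r big_seq.
rewrite (eq_bigr (fun=> 1%N%:R)) => [|h']; last first.
  by rewrite mem_filter => /andP[/andP[_ gB] h'A]; rewrite !supp1 // mulr1.
rewrite -big_seq -natr_sum sum1_size nat1r => /eqP.
by rewrite -(dvdn_pcharf (two_in_pchar _ F01)) dvdn2 negbK.
Qed.

End ZeroProduct.
End Convolution.

Theorem mainTheorem8 (G : choiceType) (mul : G -> G -> G) (one : G) (inv : G -> G)
    (F : fieldType) (alpha beta : grpalg G F) (n : nat) :
  is_group mul one inv ->
  (exists x, alpha x != 0) ->
  (exists x, beta x != 0) ->
  #|` supp alpha| = n ->
  (forall x, gaprod mul alpha beta x = 0) ->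
  (forall v, v \in supp beta ->
     (n <= zd_degree mul alpha beta v <= n * (n - 1))%N) /\
  ((forall c : F, c = 0 \/ c = 1) ->
     forall v, v \in supp beta ->
       odd (zd_degree mul alpha beta v) = odd n).
Proof.
move=> grp _ _ <- ab0; split => [v vB | F01 v vB];
  rewrite zd_degreeE (card_zd_tuples_at grp) //.
- rewrite -[X in (X <= _)%N]muln1; apply: sum_nat_seq_bounds => h hA.
  by rewrite (size_zd_partners_gt0 grp ab0 hA vB) size_zd_partners_le.
- by apply: odd_sum_odd => h hA; apply: (odd_size_zd_partners grp ab0 hA vB F01).
Qed.
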